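(* Let $\mathcal{L}$ and $\mathcal{K}$ be $2$-categories with pseudolimits of arrows, and let $U\colon\mathcal{L}\to\mathcal{K}$ be a $2$-functor preserving pseudolimits of arrows. Then $U$ preserves equivalences, injective equivalences, retract equivalences, normal retract equivalences, representable isofibrations, and normal isofibrations.
   Context: An equivalence is a morphism $f\colon A\to B$ with $g\colon B\to A$ and invertible $2$-cells $1\cong gf$, $fg\cong 1$; an injective equivalence is an equivalence with a retraction; a retract equivalence is an equivalence with a section; a normal retract equivalence is a retract equivalence which is also a normal isofibration. The pseudolimit of an arrow $f\colon A\to B$ is an object $L_f$ with $u_f\colon L_f\to A$, $v_f\colon L_f\to B$ and invertible $\lambda_f\colon v_f\cong fu_f$, universal among such data; $U$ preserves it if $(UL_f,Uu_f,Uv_f,U\lambda_f)$ is a pseudolimit of $Uf$. A morphism $f\colon A\to B$ is a representable isofibration if for every object $X$, given $g\colon X\to A$, $h\colon X\to B$ and invertible $\alpha\colon fg\cong h$, there exist $h'\colon X\to A$ and invertible $\alpha'\colon g\cong h'$ with $f\alpha'=\alpha$. A cleavage is a choice of such $(\alpha',h')$ for every $(g,\alpha,h)$, natural in $X$; it is normal if $\alpha'$ is an identity whenever $\alpha$ is. A normal isofibration is a representable isofibration admitting a normal cleavage. *)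

(* A 2-category is presented "globularly": for each
   pair of objects a type of 1-cells and a type of 2-cells, with source and
   target maps from 2-cells to 1-cells.  Vertical composition is a total
   operation whose laws are only required on composable pairs. *)

Set Implicit Arguments.
Unset Strict Implicit.

Record TwoCatData := {
  ob : Type;
  hom : ob -> ob -> Type;
  cell : ob -> ob -> Type;
  src : forall A B, cell A B -> hom A B;
  tgt : forall A B, cell A B -> hom A B;
  id1 : forall A, hom A A;
  comp1 : forall A B C, hom B C -> hom A B -> hom A C;   (* comp1 g f = g o f *)
  id2 : forall A B, hom A B -> cell A B;
  vcomp : forall A B, cell A B -> cell A B -> cell A B;  (* vcomp b a = b . a *)
  hcomp : forall A B C, cell B C -> cell A B -> cell A C (* hcomp b a = b * a *)
}.

Arguments hom {_} _ _.
Arguments cell {_} _ _.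
Arguments src {_ _ _} _.
Arguments tgt {_ _ _} _.
Arguments id1 {_} _.
Arguments comp1 {_ _ _ _} _ _.
Arguments id2 {_ _ _} _.
Arguments vcomp {_ _ _} _ _.
Arguments hcomp {_ _ _ _} _ _.

Record IsTwoCat (C : TwoCatData) : Prop := {
  src_id2 : forall (A B : ob C) (f : hom A B), src (id2 f) = f;
  tgt_id2 : forall (A B : ob C) (f : hom A B), tgt (id2 f) = f;
  src_vcomp : forall (A B : ob C) (a b : cell A B),
      tgt a = src b -> src (vcomp b a) = src a;
  tgt_vcomp : forall (A B : ob C) (a b : cell A B),
      tgt a = src b -> tgt (vcomp b a) = tgt b;
  src_hcomp : forall (A B D : ob C) (b : cell B D) (a : cell A B),
      src (hcomp b a) = comp1 (src b) (src a);
  tgt_hcomp : forall (A B D : ob C) (b : cell B D) (a : cell A B),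
      tgt (hcomp b a) = comp1 (tgt b) (tgt a);
  comp1_assoc : forall (A B D E : ob C) (h : hom D E) (g : hom B D) (f : hom A B),
      comp1 h (comp1 g f) = comp1 (comp1 h g) f;
  comp1_id_l : forall (A B : ob C) (f : hom A B), comp1 (id1 B) f = f;
  comp1_id_r : forall (A B : ob C) (f : hom A B), comp1 f (id1 A) = f;
  vcomp_id_l : forall (A B : ob C) (a : cell A B), vcomp (id2 (tgt a)) a = a;
  vcomp_id_r : forall (A B : ob C) (a : cell A B), vcomp a (id2 (src a)) = a;
  vcomp_assoc : forall (A B : ob C) (a b c : cell A B),
      tgt a = src b -> tgt b = src c -> vcomp c (vcomp b a) = vcomp (vcomp c b) a;
  hcomp_assoc : forall (A B D E : ob C) (c : cell D E) (b : cell B D) (a : cell A B),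
      hcomp c (hcomp b a) = hcomp (hcomp c b) a;
  hcomp_id_l : forall (A B : ob C) (a : cell A B), hcomp (id2 (id1 B)) a = a;
  hcomp_id_r : forall (A B : ob C) (a : cell A B), hcomp a (id2 (id1 A)) = a;
  hcomp_id2 : forall (A B D : ob C) (g : hom B D) (f : hom A B),
      hcomp (id2 g) (id2 f) = id2 (comp1 g f);
  interchange : forall (A B D : ob C) (a a' : cell A B) (b b' : cell B D),
      tgt a = src a' -> tgt b = src b' ->
      hcomp (vcomp b' b) (vcomp a' a) = vcomp (hcomp b' a') (hcomp b a)
}.

Record TwoCat := { tc_data :> TwoCatData; tc_axioms : IsTwoCat tc_data }.

Record TwoFunctorData (C D : TwoCatData) := {
  F0 : ob C -> ob D;
  F1 : forall A B : ob C, hom A B -> hom (F0 A) (F0 B);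
  F2 : forall A B : ob C, cell A B -> cell (F0 A) (F0 B)
}.
Arguments F0 {_ _} _ _.
Arguments F1 {_ _} _ {_ _} _.
Arguments F2 {_ _} _ {_ _} _.

Record IsTwoFunctor (C D : TwoCatData) (U : TwoFunctorData C D) : Prop := {
  F1_id : forall A : ob C, F1 U (id1 A) = id1 (F0 U A);
  F1_comp : forall (A B E : ob C) (g : hom B E) (f : hom A B),
      F1 U (comp1 g f) = comp1 (F1 U g) (F1 U f);
  F2_src : forall (A B : ob C) (a : cell A B), src (F2 U a) = F1 U (src a);
  F2_tgt : forall (A B : ob C) (a : cell A B), tgt (F2 U a) = F1 U (tgt a);
  F2_id : forall (A B : ob C) (f : hom A B), F2 U (id2 f) = id2 (F1 U f);
  F2_vcomp : forall (A B : ob C) (a b : cell A B),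
      tgt a = src b -> F2 U (vcomp b a) = vcomp (F2 U b) (F2 U a);
  F2_hcomp : forall (A B E : ob C) (b : cell B E) (a : cell A B),
      F2 U (hcomp b a) = hcomp (F2 U b) (F2 U a)
}.

Record TwoFunctor (C D : TwoCat) :=
  { tf_data :> TwoFunctorData C D; tf_axioms : IsTwoFunctor tf_data }.

Section Notions.
Variable C : TwoCatData.

Definition is_cell {A B : ob C} (a : cell A B) (f g : hom A B) : Prop :=
  src a = f /\ tgt a = g.

Definition invertible {A B : ob C} (a : cell A B) : Prop :=
  exists b : cell A B, src b = tgt a /\ tgt b = src a /\
    vcomp b a = id2 (src a) /\ vcomp a b = id2 (tgt a).

Definition whiskerL {A B D : ob C} (f : hom B D) (a : cell A B) : cell A D :=
  hcomp (id2 f) a.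
Definition whiskerR {A B D : ob C} (a : cell B D) (k : hom A B) : cell A D :=
  hcomp a (id2 k).

Definition equivalence {A B : ob C} (f : hom A B) : Prop :=
  exists (g : hom B A) (eta : cell A A) (eps : cell B B),
    is_cell eta (id1 A) (comp1 g f) /\ invertible eta /\
    is_cell eps (comp1 f g) (id1 B) /\ invertible eps.

Definition has_retraction {A B : ob C} (f : hom A B) : Prop :=
  exists r : hom B A, comp1 r f = id1 A.

Definition has_section {A B : ob C} (f : hom A B) : Prop :=
  exists s : hom B A, comp1 f s = id1 B.

Definition injective_equivalence {A B : ob C} (f : hom A B) : Prop :=
  equivalence f /\ has_retraction f.

Definition retract_equivalence {A B : ob C} (f : hom A B) : Prop :=
  equivalence f /\ has_section f.

Definition representable_isofibration {A B : ob C} (f : hom A B) : Prop :=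
  forall (X : ob C) (g : hom X A) (h : hom X B) (a : cell X B),
    is_cell a (comp1 f g) h -> invertible a ->
    exists (h' : hom X A) (a' : cell X A),
      is_cell a' g h' /\ invertible a' /\ whiskerL f a' = a.

(* A cleavage: a choice of lift  L g a  (its target is h'), for every
   (g, a) with a : f g ~= h invertible; the values of L on other inputs
   are irrelevant. *)
Definition lift_choice (A B : ob C) :=
  forall X : ob C, hom X A -> cell X B -> cell X A.

Definition is_cleavage {A B : ob C} (f : hom A B) (L : lift_choice A B) : Prop :=
  (forall (X : ob C) (g : hom X A) (a : cell X B),
     src a = comp1 f g -> invertible a ->
     src (L X g a) = g /\ invertible (L X g a) /\ whiskerL f (L X g a) = a) /\
  (forall (Y X : ob C) (k : hom Y X) (g : hom X A) (a : cell X B),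
     src a = comp1 f g -> invertible a ->
     L Y (comp1 g k) (whiskerR a k) = whiskerR (L X g a) k).

Definition is_normal_cleavage {A B : ob C} (f : hom A B) (L : lift_choice A B) : Prop :=
  is_cleavage f L /\
  (forall (X : ob C) (g : hom X A) (h : hom X B),
     is_cell (id2 h) (comp1 f g) h -> L X g (id2 h) = id2 g).

Definition normal_isofibration {A B : ob C} (f : hom A B) : Prop :=
  representable_isofibration f /\ exists L : lift_choice A B, is_normal_cleavage f L.

Definition normal_retract_equivalence {A B : ob C} (f : hom A B) : Prop :=
  retract_equivalence f /\ normal_isofibration f.

(* Pseudolimit of an arrow f : A -> B: (L, u, v, lam : v ~= f u) such that
   for every X, composition with the universal cone is an isomorphism between
   hom(X, L) and the category of pseudo-cones (p, q, mu : q ~= f p) over X. *)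
Definition is_pseudolimit {A B : ob C} (f : hom A B)
    (L : ob C) (u : hom L A) (v : hom L B) (lam : cell L B) : Prop :=
  is_cell lam v (comp1 f u) /\ invertible lam /\
  (forall (X : ob C) (p : hom X A) (q : hom X B) (mu : cell X B),
     is_cell mu q (comp1 f p) -> invertible mu ->
     exists m : hom X L,
       (comp1 u m = p /\ comp1 v m = q /\ whiskerR lam m = mu) /\
       forall m' : hom X L,
         comp1 u m' = p -> comp1 v m' = q -> whiskerR lam m' = mu -> m' = m) /\
  (forall (X : ob C) (m m' : hom X L) (s : cell X A) (t : cell X B),
     is_cell s (comp1 u m) (comp1 u m') -> is_cell t (comp1 v m) (comp1 v m') ->
     vcomp (whiskerL f s) (whiskerR lam m) = vcomp (whiskerR lam m') t ->
     exists th : cell X L,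
       (is_cell th m m' /\ whiskerL u th = s /\ whiskerL v th = t) /\
       forall th' : cell X L,
         is_cell th' m m' -> whiskerL u th' = s -> whiskerL v th' = t -> th' = th).

Definition has_pseudolimits_of_arrows : Prop :=
  forall (A B : ob C) (f : hom A B),
    exists (L : ob C) (u : hom L A) (v : hom L B) (lam : cell L B),
      is_pseudolimit f u v lam.

End Notions.

Arguments is_pseudolimit {C A B} f {L} u v lam.

Definition preserves_pseudolimits_of_arrows {C D : TwoCatData}
    (U : TwoFunctorData C D) : Prop :=
  forall (A B : ob C) (f : hom A B) (L : ob C) (u : hom L A) (v : hom L B)
         (lam : cell L B),
    is_pseudolimit f u v lam ->
    is_pseudolimit (F1 U f) (F1 U u) (F1 U v) (F2 U lam).

(* A lifting structure on f is determined by one generic lift.  In the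
   pseudolimit (L, u, v, lam : v ~= f u) of f, a lift of lam^-1 : f u ~= v is an
   invertible al : u ~= p with f al = lam^-1.  Every lifting problem
   (g, a : f g ~= h) over X is the restriction of this one along the map
   m : X -> L induced by the pseudo-cone (g, h, a^-1), so al m solves it, and
   naturally in X.  The resulting cleavage is normal as soon as al restricts
   to the identity along the map i : A -> L induced by (1, f, 1).  Both
   conditions are equations between 1- and 2-cells of the pseudolimit cone, so
   a 2-functor preserving that cone carries them over.  Equivalences, sections
   and retractions are preserved by any 2-functor. *)

From Stdlib Require Import ClassicalEpsilon.
Set Implicit Arguments.
Unset Strict Implicit.

Section TwoCategory.
Variable C : TwoCatData.
Hypothesis HC : IsTwoCat C.

Definition is_inverse {A B : ob C} (a b : cell A B) : Prop :=
  src b = tgt a /\ tgt b = src a /\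
  vcomp b a = id2 (src a) /\ vcomp a b = id2 (tgt a).

Lemma is_inverse_sym {A B : ob C} (a b : cell A B) : is_inverse a b -> is_inverse b a.
Proof.
  intros (e1 & e2 & e3 & e4). repeat split; auto.
  - rewrite e1; exact e4.
  - rewrite e2; exact e3.
Qed.

Lemma is_inverse_unique {A B : ob C} (a b b' : cell A B) :
  is_inverse a b -> is_inverse a b' -> b = b'.
Proof.
  intros (e1 & e2 & e3 & e4) (k1 & k2 & k3 & k4).
  rewrite <- (vcomp_id_r HC b), e1, <- k4, (vcomp_assoc HC) by congruence.
  rewrite e3, <- k2. apply (vcomp_id_l HC).
Qed.

Lemma vcomp_id2 {A B : ob C} (f : hom A B) : vcomp (id2 f) (id2 f) = id2 f.
Proof. rewrite <- (tgt_id2 HC f) at 1. apply (vcomp_id_l HC). Qed.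

Lemma is_inverse_id2 {A B : ob C} (f : hom A B) : is_inverse (id2 f) (id2 f).
Proof. unfold is_inverse. rewrite (src_id2 HC), (tgt_id2 HC), vcomp_id2. auto. Qed.

Lemma src_whiskerR {A B D : ob C} (a : cell B D) (k : hom A B) :
  src (whiskerR a k) = comp1 (src a) k.
Proof. unfold whiskerR. rewrite (src_hcomp HC), (src_id2 HC). reflexivity. Qed.

Lemma tgt_whiskerR {A B D : ob C} (a : cell B D) (k : hom A B) :
  tgt (whiskerR a k) = comp1 (tgt a) k.
Proof. unfold whiskerR. rewrite (tgt_hcomp HC), (tgt_id2 HC). reflexivity. Qed.

Lemma is_inverse_whiskerR {A B D : ob C} (a b : cell B D) (k : hom A B) :
  is_inverse a b -> is_inverse (whiskerR a k) (whiskerR b k).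
Proof.
  intros (e1 & e2 & e3 & e4). unfold is_inverse.
  rewrite !src_whiskerR, !tgt_whiskerR, e1, e2.
  repeat split; unfold whiskerR;
    rewrite <- (interchange HC) by (rewrite ?(src_id2 HC), ?(tgt_id2 HC); congruence);
    rewrite vcomp_id2, ?e3, ?e4, (hcomp_id2 HC); reflexivity.
Qed.

Lemma invertible_whiskerR {A B D : ob C} (a : cell B D) (k : hom A B) :
  invertible a -> invertible (whiskerR a k).
Proof. intros (b & Hb). exists (whiskerR b k). exact (is_inverse_whiskerR k Hb). Qed.

Lemma whiskerR_comp {A B D E : ob C} (a : cell D E) (m : hom B D) (k : hom A B) :
  whiskerR (whiskerR a m) k = whiskerR a (comp1 m k).
Proof. unfold whiskerR. rewrite <- (hcomp_assoc HC), (hcomp_id2 HC). reflexivity. Qed.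

Lemma whiskerL_whiskerR {A B D E : ob C} (f : hom D E) (a : cell B D) (m : hom A B) :
  whiskerL f (whiskerR a m) = whiskerR (whiskerL f a) m.
Proof. apply (hcomp_assoc HC). Qed.

Lemma whiskerR_id2 {A B D : ob C} (f : hom B D) (k : hom A B) :
  whiskerR (id2 f) k = id2 (comp1 f k).
Proof. apply (hcomp_id2 HC). Qed.

Section Pseudolimit.
Variables (A B L : ob C) (f : hom A B) (u : hom L A) (v : hom L B) (lam : cell L B).
Hypothesis Hpl : is_pseudolimit f u v lam.

Definition generic_lift (al : cell L A) : Prop :=
  src al = u /\ invertible al /\ is_inverse lam (whiskerL f al).

Definition normal_generic_lift (al : cell L A) : Prop :=
  generic_lift al /\
  exists i : hom A L,
    comp1 u i = id1 A /\ whiskerR lam i = id2 f /\ whiskerR al i = id2 (id1 A).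

(* [m] is the map into [L] induced by the pseudo-cone [(g, tgt a, a^-1)]. *)
Definition classifies {X : ob C} (g : hom X A) (a : cell X B) (m : hom X L) : Prop :=
  comp1 u m = g /\ comp1 v m = tgt a /\ is_inverse a (whiskerR lam m).

Lemma classifies_exists {X : ob C} (g : hom X A) (a : cell X B) :
  src a = comp1 f g -> invertible a -> exists m, classifies g a m.
Proof.
  intros e (b & eb1 & eb2 & eb3 & eb4).
  destruct Hpl as (_ & _ & universal1 & _).
  destruct (universal1 X g (tgt a) b) as (m & (e1 & e2 & e3) & _).
  - split; congruence.
  - exists a. apply is_inverse_sym. repeat split; auto.
  - exists m. repeat split; auto; rewrite e3; auto.
Qed.

Lemma classifies_unique {X : ob C} (g : hom X A) (a : cell X B) (m m' : hom X L) :
  classifies g a m -> classifies g a m' -> m = m'.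
Proof.
  intros (e1 & e2 & e3) (k1 & k2 & k3).
  destruct Hpl as ((src_lam & tgt_lam) & _ & universal1 & _).
  destruct (universal1 X g (tgt a) (whiskerR lam m)) as (m0 & _ & unique_m0).
  - split.
    + rewrite src_whiskerR, src_lam. exact e2.
    + rewrite tgt_whiskerR, tgt_lam, <- (comp1_assoc HC), e1. reflexivity.
  - exists a. apply is_inverse_sym; exact e3.
  - rewrite (unique_m0 m), (unique_m0 m'); auto.
    eapply is_inverse_unique; eauto.
Qed.

Lemma classifies_comp {Y X : ob C} (k : hom Y X) (g : hom X A) (a : cell X B) (m : hom X L) :
  classifies g a m -> classifies (comp1 g k) (whiskerR a k) (comp1 m k).
Proof.
  intros (e1 & e2 & e3). split; [| split].
  - rewrite (comp1_assoc HC), e1. reflexivity.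
  - rewrite (comp1_assoc HC), e2, tgt_whiskerR. reflexivity.
  - rewrite <- whiskerR_comp. apply is_inverse_whiskerR; exact e3.
Qed.

Lemma representable_isofibration_generic_lift :
  representable_isofibration f -> exists al, generic_lift al.
Proof.
  intros Hf. destruct Hpl as ((src_lam & tgt_lam) & (b & Hb) & _).
  pose proof Hb as (src_b & tgt_b & _).
  destruct (Hf L u v b) as (p & al & (src_al & _) & al_inv & f_al).
  - split; congruence.
  - exists lam. apply is_inverse_sym; exact Hb.
  - exists al. split; [exact src_al | split; [exact al_inv |]].
    rewrite f_al. exact Hb.
Qed.

Section CleavageOfGenericLift.
Variable al : cell L A.
Hypothesis Hal : generic_lift al.

(* The [right] branch is junk: by [classifies_exists] it is never taken on a
   genuine lifting problem. *)
Definition cleavage_of_generic_lift : lift_choice A B := fun X g a =>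
  match excluded_middle_informative (exists m, classifies g a m) with
  | left H => whiskerR al (proj1_sig (constructive_indefinite_description _ H))
  | right _ => id2 g
  end.
Arguments cleavage_of_generic_lift : clear implicits.

Lemma cleavage_of_generic_liftE {X : ob C} (g : hom X A) (a : cell X B) (m : hom X L) :
  classifies g a m -> cleavage_of_generic_lift X g a = whiskerR al m.
Proof.
  intros Hm. unfold cleavage_of_generic_lift.
  destruct (excluded_middle_informative _) as [H | H].
  - destruct (constructive_indefinite_description _ H) as (m0 & Hm0); simpl.
    f_equal. exact (classifies_unique Hm0 Hm).
  - exfalso. eauto.
Qed.

Lemma is_cleavage_of_generic_lift : is_cleavage f cleavage_of_generic_lift.
Proof.
  destruct Hal as (src_al & al_inv & f_al).
  split.
  - intros X g a e a_inv. destruct (classifies_exists e a_inv) as (m & Hm).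
    rewrite (cleavage_of_generic_liftE Hm).
    destruct Hm as (e1 & _ & e3). repeat split.
    + rewrite src_whiskerR, src_al. exact e1.
    + apply invertible_whiskerR; exact al_inv.
    + rewrite whiskerL_whiskerR.
      eapply is_inverse_unique.
      * apply is_inverse_whiskerR; exact f_al.
      * apply is_inverse_sym; exact e3.
  - intros Y X k g a e a_inv. destruct (classifies_exists e a_inv) as (m & Hm).
    rewrite (cleavage_of_generic_liftE Hm), whiskerR_comp.
    apply cleavage_of_generic_liftE, classifies_comp; exact Hm.
Qed.

Lemma generic_lift_representable_isofibration : representable_isofibration f.
Proof.
  intros X g h a (src_a & _) a_inv.
  destruct (proj1 is_cleavage_of_generic_lift X g a src_a a_inv) as (src_lift & lift_inv & f_lift).
  exists (tgt (cleavage_of_generic_lift X g a)), (cleavage_of_generic_lift X g a).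
  repeat split; auto.
Qed.

End CleavageOfGenericLift.

Lemma normal_isofibration_normal_generic_lift :
  normal_isofibration f -> exists al, normal_generic_lift al.
Proof.
  intros (_ & lift & (Hlift & lift_nat) & lift_normal).
  destruct Hpl as ((src_lam & tgt_lam) & (b & Hb) & universal1 & _).
  pose proof Hb as (src_b & tgt_b & _).
  assert (b_inv : invertible b) by (exists lam; apply is_inverse_sym; exact Hb).
  destruct (Hlift L u b ltac:(congruence) b_inv) as (src_al & al_inv & f_al).
  destruct (universal1 A (id1 A) f (id2 f)) as (i & (ui & vi & lam_i) & _).
  { split; [apply (src_id2 HC) | rewrite (tgt_id2 HC), (comp1_id_r HC); reflexivity]. }
  { exists (id2 f). apply is_inverse_id2. }
  assert (b_i : whiskerR b i = id2 f).
  { apply (is_inverse_unique (a := whiskerR lam i)).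
    - apply is_inverse_whiskerR; exact Hb.
    - rewrite lam_i. apply is_inverse_id2. }
  exists (lift L u b). split.
  - split; [exact src_al | split; [exact al_inv |]].
    rewrite f_al. exact Hb.
  - exists i. split; [exact ui | split; [exact lam_i |]].
    rewrite <- lift_nat by congruence. rewrite ui, b_i.
    apply lift_normal.
    split; [rewrite (src_id2 HC), (comp1_id_r HC); reflexivity | apply (tgt_id2 HC)].
Qed.

(* The identity [lam i = id] makes [i] classify the trivial lifting problems
   [(g, id_h)] in the form [i g], where [al] restricts to the identity. *)
Lemma normal_generic_lift_normal_isofibration (al : cell L A) :
  normal_generic_lift al -> normal_isofibration f.
Proof.
  intros (Hal & i & ui & lam_i & al_i).
  split; [exact (generic_lift_representable_isofibration Hal) |].
  exists (cleavage_of_generic_lift al).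
  split; [exact (is_cleavage_of_generic_lift Hal) |].
  intros X g h (src_h & _). rewrite (src_id2 HC) in src_h. subst h.
  assert (vi : comp1 v i = f).
  { destruct Hpl as ((src_lam & _) & _).
    rewrite <- src_lam, <- src_whiskerR, lam_i. apply (src_id2 HC). }
  rewrite (@cleavage_of_generic_liftE al X g (id2 (comp1 f g)) (comp1 i g)).
  - rewrite <- whiskerR_comp, al_i, whiskerR_id2, (comp1_id_l HC). reflexivity.
  - split; [| split].
    + rewrite (comp1_assoc HC), ui. apply (comp1_id_l HC).
    + rewrite (comp1_assoc HC), vi, (tgt_id2 HC). reflexivity.
    + rewrite <- whiskerR_comp, lam_i, whiskerR_id2. apply is_inverse_id2.
Qed.

End Pseudolimit.
End TwoCategory.

Section TwoFunctor.
Variables (C D : TwoCatData) (U : TwoFunctorData C D).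
Hypothesis HU : IsTwoFunctor U.

Lemma is_inverse_F2 {A B : ob C} (a b : cell A B) :
  is_inverse a b -> is_inverse (F2 U a) (F2 U b).
Proof.
  intros (e1 & e2 & e3 & e4). unfold is_inverse.
  rewrite !(F2_src HU), !(F2_tgt HU), e1, e2.
  repeat split; rewrite <- (F2_vcomp HU) by congruence;
    rewrite ?e3, ?e4, (F2_id HU); reflexivity.
Qed.

Lemma invertible_F2 {A B : ob C} (a : cell A B) : invertible a -> invertible (F2 U a).
Proof. intros (b & Hb). exists (F2 U b). exact (is_inverse_F2 Hb). Qed.

Lemma F2_whiskerR {A B E : ob C} (a : cell B E) (k : hom A B) :
  F2 U (whiskerR a k) = whiskerR (F2 U a) (F1 U k).
Proof. unfold whiskerR. rewrite (F2_hcomp HU), (F2_id HU). reflexivity. Qed.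

Lemma F2_whiskerL {A B E : ob C} (f : hom B E) (a : cell A B) :
  F2 U (whiskerL f a) = whiskerL (F1 U f) (F2 U a).
Proof. unfold whiskerL. rewrite (F2_hcomp HU), (F2_id HU). reflexivity. Qed.

Lemma equivalence_F1 {A B : ob C} (f : hom A B) : equivalence f -> equivalence (F1 U f).
Proof.
  intros (g & eta & eps & (src_eta & tgt_eta) & eta_inv & (src_eps & tgt_eps) & eps_inv).
  exists (F1 U g), (F2 U eta), (F2 U eps). unfold is_cell.
  rewrite !(F2_src HU), !(F2_tgt HU), src_eta, tgt_eta, src_eps, tgt_eps,
    !(F1_id HU), !(F1_comp HU).
  repeat split; apply invertible_F2; assumption.
Qed.

Lemma has_retraction_F1 {A B : ob C} (f : hom A B) :
  has_retraction f -> has_retraction (F1 U f).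
Proof. intros (r & e). exists (F1 U r). rewrite <- (F1_comp HU), e. apply (F1_id HU). Qed.

Lemma has_section_F1 {A B : ob C} (f : hom A B) :
  has_section f -> has_section (F1 U f).
Proof. intros (s & e). exists (F1 U s). rewrite <- (F1_comp HU), e. apply (F1_id HU). Qed.

Lemma generic_lift_F2 {A B L : ob C} (f : hom A B) (u : hom L A) (lam : cell L B)
    (al : cell L A) :
  generic_lift f u lam al -> generic_lift (F1 U f) (F1 U u) (F2 U lam) (F2 U al).
Proof.
  intros (src_al & al_inv & f_al). split; [| split].
  - rewrite (F2_src HU), src_al. reflexivity.
  - apply invertible_F2; exact al_inv.
  - rewrite <- F2_whiskerL; apply is_inverse_F2; exact f_al.
Qed.

Lemma normal_generic_lift_F2 {A B L : ob C} (f : hom A B) (u : hom L A) (lam : cell L B)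
    (al : cell L A) :
  normal_generic_lift f u lam al ->
  normal_generic_lift (F1 U f) (F1 U u) (F2 U lam) (F2 U al).
Proof.
  intros (Hal & i & ui & lam_i & al_i).
  split; [exact (generic_lift_F2 Hal) |].
  exists (F1 U i). split; [| split].
  - rewrite <- (F1_comp HU), ui. apply (F1_id HU).
  - rewrite <- F2_whiskerR, lam_i. apply (F2_id HU).
  - rewrite <- F2_whiskerR, al_i, (F2_id HU). f_equal. apply (F1_id HU).
Qed.

End TwoFunctor.

Theorem proposition3p15 (LL KK : TwoCat) (U : TwoFunctor LL KK) :
  has_pseudolimits_of_arrows LL ->
  has_pseudolimits_of_arrows KK ->
  preserves_pseudolimits_of_arrows U ->
  forall (A B : ob LL) (f : hom A B),
    (equivalence f -> equivalence (F1 U f)) /\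
    (injective_equivalence f -> injective_equivalence (F1 U f)) /\
    (retract_equivalence f -> retract_equivalence (F1 U f)) /\
    (normal_retract_equivalence f -> normal_retract_equivalence (F1 U f)) /\
    (representable_isofibration f -> representable_isofibration (F1 U f)) /\
    (normal_isofibration f -> normal_isofibration (F1 U f)).
Proof.
  intros HL _ HP A B f.
  pose proof (tc_axioms LL) as HC. pose proof (tc_axioms KK) as HD.
  pose proof (tf_axioms U) as HU.
  destruct (HL A B f) as (L & u & v & lam & Hpl).
  pose proof (HP A B f L u v lam Hpl) as HplU.
  assert (normal_isofibration_F1 : normal_isofibration f -> normal_isofibration (F1 U f)).
  { intros Hf. destruct (normal_isofibration_normal_generic_lift HC Hpl Hf) as (al & Hal).
    exact (normal_generic_lift_normal_isofibration HD HplU (normal_generic_lift_F2 HU Hal)). }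
  split; [| split; [| split; [| split; [| split]]]].
  - apply (equivalence_F1 HU).
  - intros (e & r). split; [apply (equivalence_F1 HU) | apply (has_retraction_F1 HU)]; auto.
  - intros (e & s). split; [apply (equivalence_F1 HU) | apply (has_section_F1 HU)]; auto.
  - intros ((e & s) & n). split; [split |].
    + apply (equivalence_F1 HU); exact e.
    + apply (has_section_F1 HU); exact s.
    + exact (normal_isofibration_F1 n).
  - intros Hf. destruct (representable_isofibration_generic_lift Hpl Hf) as (al & Hal).
    exact (generic_lift_representable_isofibration HD HplU (generic_lift_F2 HU Hal)).
  - exact normal_isofibration_F1.
Qed.
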